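(* Let $G\in\mathcal{B}$ be a bounded metric space and let $r>\operatorname{diam}G$ be a real number. Then the sphere $S_r(G)=\{Y\in\mathcal{GH}: d_{GH}(G,Y)=r\}$ is path connected (it is contained in $\mathcal{B}$, and any two of its elements can be joined by a continuous curve with image in $S_r(G)$).
   Context: All metric spaces (with finite-valued metrics) are considered up to isometry. $\mathcal{GH}$ denotes the class (in the sense of von Neumann–Bernays–Gödel set theory) of representatives of isometry classes of all metric spaces, and $\mathcal{B}\subset\mathcal{GH}$ the subclass of bounded metric spaces. $d_{GH}$ is the Gromov–Hausdorff distance, with values in $[0,\infty]$: $d_{GH}(X,Y)$ is the infimum of $r$ such that there exist a metric space $Z$ and subsets $X',Y'\subset Z$ isometric to $X,Y$ with Hausdorff distance $d_H(X',Y')\le r$. Topology on the class: for each cardinal $n$, the subclass $\mathcal{GH}_n$ of spaces of cardinality at most $n$ is a set, endowed with the topology whose base consists of the open balls of $d_{GH}$. A map $f$ from a topological space $Z$ to $\mathcal{GH}$ is continuous if it is continuous as a map into $\mathcal{GH}_n$ for some (equivalently, every) cardinal $n$ with $f(Z)\subset\mathcal{GH}_n$. A continuous curve is a continuous map from a segment $[a,b]$. *)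

From Stdlib Require Import Reals.
Open Scope R_scope.

Record MetricSpace := {
  carrier :> Type;
  dist : carrier -> carrier -> R;
  pt : carrier;
  dist_refl : forall x, dist x x = 0;
  dist_sep : forall x y, dist x y = 0 -> x = y;
  dist_sym : forall x y, dist x y = dist y x;
  dist_tri : forall x y z, dist x z <= dist x y + dist y z
}.

Arguments dist {m} _ _.

Definition isom_embedding (X Z : MetricSpace) (f : X -> Z) : Prop :=
  forall x x', dist (f x) (f x') = dist x x'.

Definition isometric (X Y : MetricSpace) : Prop :=
  exists (f : X -> Y) (g : Y -> X),
    isom_embedding X Y f /\ (forall x, g (f x) = x) /\ (forall y, f (g y) = y).

(* Hausdorff distance between the images f(X) and g(Y) in Z is <= s
   (d_H(A,B) = max(sup_a inf_b d(a,b), sup_b inf_a d(a,b)), unfolded). *)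
Definition hausdorff_le (X Y Z : MetricSpace) (f : X -> Z) (g : Y -> Z) (s : R) : Prop :=
  (forall x, forall e, 0 < e -> exists y, dist (f x) (g y) < s + e) /\
  (forall y, forall e, 0 < e -> exists x, dist (f x) (g y) < s + e).

(* s belongs to the set whose infimum is d_GH(X,Y). *)
Definition GH_admissible (X Y : MetricSpace) (s : R) : Prop :=
  exists (Z : MetricSpace) (f : X -> Z) (g : Y -> Z),
    isom_embedding X Z f /\ isom_embedding Y Z g /\ hausdorff_le X Y Z f g s.

Definition GH_dist_eq (X Y : MetricSpace) (r : R) : Prop :=
  (forall s, GH_admissible X Y s -> r <= s) /\
  (forall m, (forall s, GH_admissible X Y s -> m <= s) -> m <= r).

Definition GH_dist_lt (X Y : MetricSpace) (e : R) : Prop :=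
  exists s, s < e /\ GH_admissible X Y s.

Definition ms_bounded (X : MetricSpace) : Prop :=
  exists C, forall x y : X, dist x y <= C.

Definition diam_lt (X : MetricSpace) (r : R) : Prop :=
  exists s, s < r /\ forall x y : X, dist x y <= s.

(* Continuity of gamma on [a,b] for the topology generated by open d_GH-balls. *)
Definition GH_continuous_on (a b : R) (gamma : R -> MetricSpace) : Prop :=
  forall t0, a <= t0 <= b -> forall eps, 0 < eps ->
    exists delta, 0 < delta /\
      forall t, a <= t <= b -> Rabs (t - t0) < delta -> GH_dist_lt (gamma t0) (gamma t) eps.

Definition in_sphere (G : MetricSpace) (r : R) (Y : MetricSpace) : Prop :=
  GH_dist_eq G Y r.

From Pilot Require Import Defs.
From Stdlib Require Import Reals Lra Classical ClassicalEpsilon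
  FunctionalExtensionality PropExtensionality.
(* Stdlib's [Rtopology] also defines [dist], [dist_tri], ...; make the fields of
   [MetricSpace] take precedence again. *)
Import Defs.
Open Scope R_scope.

(* Distances to [G] are handled through correspondences: one of distortion [2 s] glues two
   spaces at Hausdorff distance [s], so [d_GH(G, M) < r] iff some correspondence of distortion
   below [2 r] exists.  Since [r > diam G], shrinking the metric of a space at distance [r]
   from [G] by any factor [c < 1] brings it strictly closer to [G].  Hence a bounded space [M]
   has exactly one rescaling [lam M] on the sphere, with [lam = sup {l | d_GH(G, l M) < r}],
   and [lam] varies Lipschitz-continuously along a [d_GH]-Lipschitz family of spaces.  The
   l-infinity products [X x tY] ([0 < t <= 1]) and [(2-t)X x Y] ([1 <= t < 2]) form such a
   family from [X] to [Y]; rescaling each member onto the sphere gives the path, and by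
   uniqueness the end rescalings are trivial. *)

Definition Rsup (E : R -> Prop) : R := epsilon (inhabits 0) (is_lub E).

Lemma Rsup_lub (E : R -> Prop) : bound E -> (exists x, E x) -> is_lub E (Rsup E).
Proof.
  intros Hb Hne. unfold Rsup. apply epsilon_spec.
  destruct (completeness E Hb Hne) as [m Hm]. now exists m.
Qed.

Definition Rinf (E : R -> Prop) : R := - Rsup (fun x => E (- x)).

Lemma Rinf_opp_lub (E : R -> Prop) (b : R) :
  (forall x, E x -> b <= x) -> (exists v, E v) ->
  is_lub (fun x => E (- x)) (Rsup (fun x => E (- x))).
Proof.
  intros Hb [v Hv]. apply Rsup_lub.
  - exists (- b). intros x Hx. specialize (Hb _ Hx). lra.
  - exists (- v). now rewrite Ropp_involutive.
Qed.

Lemma Rinf_le (E : R -> Prop) (b v : R) : (forall x, E x -> b <= x) -> E v -> Rinf E <= v.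
Proof.
  intros Hb Hv. destruct (Rinf_opp_lub E b Hb (ex_intro _ v Hv)) as [Hub _].
  assert (- v <= Rsup (fun x => E (- x))) by (apply Hub; now rewrite Ropp_involutive).
  unfold Rinf. lra.
Qed.

Lemma Rinf_ge (E : R -> Prop) (m : R) : (exists v, E v) -> (forall x, E x -> m <= x) -> m <= Rinf E.
Proof.
  intros Hne Hm. destruct (Rinf_opp_lub E m Hm Hne) as [_ Hleast].
  assert (Rsup (fun x => E (- x)) <= - m).
  { apply Hleast. intros x Hx. specialize (Hm _ Hx). lra. }
  unfold Rinf. lra.
Qed.

Lemma Rinf_ext (E F : R -> Prop) : (forall x, E x <-> F x) -> Rinf E = Rinf F.
Proof.
  intros HEF. f_equal. apply functional_extensionality.
  intros x. apply propositional_extensionality. apply HEF.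
Qed.

Lemma dist_nonneg (M : MetricSpace) (x y : M) : 0 <= dist x y.
Proof.
  pose proof (dist_tri M x y x) as H. rewrite dist_refl, (dist_sym M y x) in H. lra.
Qed.

Lemma diam_nonneg (M : MetricSpace) (D : R) : (forall x y : M, dist x y <= D) -> 0 <= D.
Proof. intros HD. pose proof (HD (pt M) (pt M)) as H. rewrite dist_refl in H. exact H. Qed.

(* [corr P Q C s]: [C] is a correspondence of distortion at most [2 s]; gluing along it
   realises [d_GH(P, Q) <= s]. *)
Definition corr (P Q : MetricSpace) (C : P -> Q -> Prop) (s : R) : Prop :=
  (forall p, exists q, C p q) /\ (forall q, exists p, C p q) /\
  (forall p q p' q', C p q -> C p' q' ->
     dist q q' <= dist p p' + 2 * s /\ dist p p' <= dist q q' + 2 * s).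

Section Correspondences.
Variables P Q W : MetricSpace.

Lemma corr_nonneg (C : P -> Q -> Prop) (s : R) : corr P Q C s -> 0 <= s.
Proof.
  intros [Hp [_ Hd]]. destruct (Hp (pt P)) as [q Hq].
  destruct (Hd _ _ _ _ Hq Hq) as [H _]. rewrite !dist_refl in H. lra.
Qed.

Lemma corr_inhabited (C : P -> Q -> Prop) (s : R) : corr P Q C s -> exists p q, C p q.
Proof. intros [Hp _]. destruct (Hp (pt P)) as [q Hq]. now exists (pt P), q. Qed.

Lemma corr_mono (C : P -> Q -> Prop) (s s' : R) : corr P Q C s -> s <= s' -> corr P Q C s'.
Proof.
  intros [Hp [Hq Hd]] Hs. split; [|split]; auto.
  intros p q p' q' Ha Hb. destruct (Hd _ _ _ _ Ha Hb). split; lra.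
Qed.

Lemma corr_sym (C : P -> Q -> Prop) (s : R) : corr P Q C s -> corr Q P (fun q p => C p q) s.
Proof.
  intros [Hp [Hq Hd]]. split; [|split]; auto.
  intros q p q' p' Ha Hb. destruct (Hd _ _ _ _ Ha Hb). split; lra.
Qed.

Lemma corr_comp (C : P -> Q -> Prop) (D : Q -> W -> Prop) (s t : R) :
  corr P Q C s -> corr Q W D t -> corr P W (fun p w => exists q, C p q /\ D q w) (s + t).
Proof.
  intros [Hp [Hq Hd]] [Kq [Kw Kd]]. split; [|split].
  - intros p. destruct (Hp p) as [q Hpq]. destruct (Kq q) as [w Hqw]. eauto.
  - intros w. destruct (Kw w) as [q Hqw]. destruct (Hq q) as [p Hpq]. eauto.
  - intros p w p' w' [q [Ha Hb]] [q' [Hc Hd']].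
    destruct (Hd _ _ _ _ Ha Hc). destruct (Kd _ _ _ _ Hb Hd'). split; lra.
Qed.

Lemma corr_total (DP DQ s : R) :
  (forall x y : P, dist x y <= DP) -> (forall x y : Q, dist x y <= DQ) ->
  DP <= 2 * s -> DQ <= 2 * s -> corr P Q (fun _ _ => True) s.
Proof.
  intros HP HQ H1 H2. split; [|split]; [intros p; exists (pt Q)|intros q; exists (pt P)|]; auto.
  intros p q p' q' _ _. pose proof (HP p p'). pose proof (HQ q q').
  pose proof (dist_nonneg P p p'). pose proof (dist_nonneg Q q q'). split; lra.
Qed.

End Correspondences.

Lemma corr_eq (P : MetricSpace) : corr P P eq 0.
Proof. split; [|split]; eauto. intros p q p' q' <- <-. split; lra. Qed.

Arguments corr_nonneg {P Q C s}.
Arguments corr_inhabited {P Q C s}.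
Arguments corr_mono {P Q C s s'}.
Arguments corr_sym {P Q C s}.
Arguments corr_comp {P Q W C D s t}.

Definition glue_gap (P Q : MetricSpace) (C : P -> Q -> Prop) (p : P) (q : Q) : R :=
  Rinf (fun v => exists p1 q1, C p1 q1 /\ v = dist p p1 + dist q1 q).

Section GlueGap.
Variables (P Q : MetricSpace) (C : P -> Q -> Prop).

Lemma glue_gap_le (p : P) (q : Q) (p1 : P) (q1 : Q) :
  C p1 q1 -> glue_gap P Q C p q <= dist p p1 + dist q1 q.
Proof.
  intros Hc. apply (Rinf_le _ 0); [|eauto].
  intros x [p2 [q2 [_ ->]]]. pose proof (dist_nonneg P p p2). pose proof (dist_nonneg Q q2 q). lra.
Qed.

Lemma glue_gap_ge (p : P) (q : Q) (m : R) : (exists p1 q1, C p1 q1) ->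
  (forall p1 q1, C p1 q1 -> m <= dist p p1 + dist q1 q) -> m <= glue_gap P Q C p q.
Proof.
  intros [p1 [q1 Hc]] Hm. apply Rinf_ge.
  - exists (dist p p1 + dist q1 q). eauto.
  - intros x [p2 [q2 [Hc2 ->]]]. auto.
Qed.

Lemma glue_gap_nonneg (p : P) (q : Q) : (exists p1 q1, C p1 q1) -> 0 <= glue_gap P Q C p q.
Proof.
  intros Hne. apply glue_gap_ge; auto. intros p1 q1 _.
  pose proof (dist_nonneg P p p1). pose proof (dist_nonneg Q q1 q). lra.
Qed.

Lemma glue_gap_swap (p : P) (q : Q) : glue_gap Q P (fun q p => C p q) q p = glue_gap P Q C p q.
Proof.
  apply Rinf_ext. intros v. split; intros [a [b [Hc ->]]]; exists b, a; split; auto;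
    rewrite (dist_sym P), (dist_sym Q); lra.
Qed.

Lemma glue_gap_lip_l (p p' : P) (q : Q) : (exists p1 q1, C p1 q1) ->
  glue_gap P Q C p q <= dist p p' + glue_gap P Q C p' q.
Proof.
  intros Hne. enough (glue_gap P Q C p q - dist p p' <= glue_gap P Q C p' q) by lra.
  apply glue_gap_ge; auto. intros p1 q1 Hc.
  pose proof (glue_gap_le p q p1 q1 Hc). pose proof (dist_tri P p p' p1). lra.
Qed.

(* Through [C p1 q1] and [C p2 q2]: d(p,p') <= d(p,p1) + d(q1,q2) + 2s + d(p2,p'). *)
Lemma glue_gap_tri_l (s : R) (p p' : P) (q : Q) : corr P Q C s ->
  dist p p' <= 2 * s + glue_gap P Q C p q + glue_gap P Q C p' q.
Proof.
  intros HC. pose proof (corr_inhabited HC) as Hne. destruct HC as [_ [_ Hd]].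
  enough (dist p p' - 2 * s - glue_gap P Q C p q <= glue_gap P Q C p' q) by lra.
  apply glue_gap_ge; auto. intros p2 q2 Hc2.
  enough (dist p p' - 2 * s - (dist p' p2 + dist q2 q) <= glue_gap P Q C p q) by lra.
  apply glue_gap_ge; auto. intros p1 q1 Hc1.
  destruct (Hd _ _ _ _ Hc1 Hc2) as [_ E].
  pose proof (dist_tri P p p1 p'). pose proof (dist_tri P p1 p2 p').
  pose proof (dist_tri Q q1 q q2). rewrite (dist_sym Q q q2) in *.
  rewrite (dist_sym P p2 p') in *. lra.
Qed.

End GlueGap.

Lemma glue_gap_lip_r (P Q : MetricSpace) (C : P -> Q -> Prop) (p : P) (q q' : Q) :
  (exists p1 q1, C p1 q1) -> glue_gap P Q C p q <= glue_gap P Q C p q' + dist q' q.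
Proof.
  intros [p1 [q1 Hc]]. rewrite <- (glue_gap_swap P Q C p q), <- (glue_gap_swap P Q C p q'), (dist_sym Q).
  rewrite Rplus_comm. apply (glue_gap_lip_l Q P (fun q p => C p q)). eauto.
Qed.

Lemma glue_gap_tri_r (P Q : MetricSpace) (C : P -> Q -> Prop) (s : R) (p : P) (q q' : Q) :
  corr P Q C s -> dist q q' <= 2 * s + glue_gap P Q C p q + glue_gap P Q C p q'.
Proof.
  intros HC. rewrite <- (glue_gap_swap P Q C p q), <- (glue_gap_swap P Q C p q').
  exact (glue_gap_tri_l _ _ _ s q q' p (corr_sym HC)).
Qed.

Section Glue.
Variables (P Q : MetricSpace) (C : P -> Q -> Prop) (s : R).
Hypotheses (HC : corr P Q C s) (s_pos : 0 < s).

Definition glue_dist (u v : P + Q) : R :=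
  match u, v with
  | inl p, inl p' => dist p p'
  | inr q, inr q' => dist q q'
  | inl p, inr q | inr q, inl p => s + glue_gap P Q C p q
  end.

Lemma glue_dist_refl (u : P + Q) : glue_dist u u = 0.
Proof. destruct u; apply dist_refl. Qed.

Lemma glue_dist_sym (u v : P + Q) : glue_dist u v = glue_dist v u.
Proof. destruct u, v; simpl; auto using dist_sym. Qed.

Lemma glue_dist_sep (u v : P + Q) : glue_dist u v = 0 -> u = v.
Proof.
  pose proof (glue_gap_nonneg P Q C) as Hg. pose proof (corr_inhabited HC) as Hne.
  destruct u as [p|q], v as [p'|q']; simpl; intros E.
  - f_equal. now apply dist_sep.
  - specialize (Hg p q' Hne). lra.
  - specialize (Hg p' q Hne). lra.
  - f_equal. now apply dist_sep.
Qed.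

Lemma glue_dist_tri (u v w : P + Q) : glue_dist u w <= glue_dist u v + glue_dist v w.
Proof.
  pose proof (corr_inhabited HC) as Hne.
  destruct u as [p|q], v as [p'|q'], w as [p''|q'']; simpl.
  - apply dist_tri.
  - pose proof (glue_gap_lip_l P Q C p p' q'' Hne). lra.
  - pose proof (glue_gap_tri_l P Q C s p p'' q' HC). lra.
  - pose proof (glue_gap_lip_r P Q C p q'' q' Hne). lra.
  - pose proof (glue_gap_lip_l P Q C p'' p' q Hne). rewrite (dist_sym P p'' p') in *. lra.
  - pose proof (glue_gap_tri_r P Q C s p' q q'' HC). lra.
  - pose proof (glue_gap_lip_r P Q C p'' q q' Hne). rewrite (dist_sym Q q' q) in *. lra.
  - apply dist_tri.
Qed.

Definition glue : MetricSpace :=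
  {| carrier := (P + Q)%type; dist := glue_dist; pt := inl (pt P);
     dist_refl := glue_dist_refl; dist_sep := glue_dist_sep;
     dist_sym := glue_dist_sym; dist_tri := glue_dist_tri |}.

End Glue.

Lemma corr_admissible (P Q : MetricSpace) (C : P -> Q -> Prop) (s s' : R) :
  corr P Q C s -> s < s' -> GH_admissible P Q s'.
Proof.
  intros HC Hs. pose proof (corr_nonneg HC).
  assert (HC' : corr P Q C s') by (apply (corr_mono HC); lra).
  exists (glue P Q C s' HC' ltac:(lra)), inl, inr. split; [|split]; try easy.
  assert (Hgap : forall p q, C p q -> glue_gap P Q C p q <= 0).
  { intros p q Hc. pose proof (glue_gap_le P Q C p q p q Hc). rewrite !dist_refl in *. lra. }
  pose proof HC' as [Hp [Hq _]]. split.
  - intros p e He. destruct (Hp p) as [q Hc]. exists q. simpl. pose proof (Hgap p q Hc). lra.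
  - intros q e He. destruct (Hq q) as [p Hc]. exists p. simpl. pose proof (Hgap p q Hc). lra.
Qed.

Lemma admissible_corr (P Q : MetricSpace) (s e : R) :
  GH_admissible P Q s -> 0 < e -> exists C, corr P Q C (s + e).
Proof.
  intros [Z [f [g [Hf [Hg [Hfg Hgf]]]]]] He.
  exists (fun p q => dist (f p) (g q) < s + e). split; [|split].
  - intros p. destruct (Hfg p e He) as [q Hq]. eauto.
  - intros q. destruct (Hgf q e He) as [p Hp]. eauto.
  - intros p q p' q' Ha Hb. rewrite <- (Hf p p'), <- (Hg q q').
    pose proof (dist_tri Z (g q) (f p) (g q')). pose proof (dist_tri Z (f p) (f p') (g q')).
    pose proof (dist_tri Z (f p) (g q) (f p')). pose proof (dist_tri Z (g q) (g q') (f p')).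
    rewrite (dist_sym Z (g q) (f p)), (dist_sym Z (g q') (f p')) in *. split; lra.
Qed.

Definition corr_lt (G M : MetricSpace) (r : R) : Prop :=
  exists C s, s < r /\ corr G M C s.

Definition corr_le (G M : MetricSpace) (r : R) : Prop :=
  forall s, r < s -> exists C, corr G M C s.

Lemma in_sphere_corr (G M : MetricSpace) (r : R) :
  in_sphere G r M <-> ~ corr_lt G M r /\ corr_le G M r.
Proof.
  split.
  - intros [Hlow Hglb]. split.
    + intros [C [s [Hs HC]]].
      pose proof (Hlow _ (corr_admissible _ _ _ s ((s + r) / 2) HC ltac:(lra))). lra.
    + intros s Hs.
      destruct (classic (exists s1, s1 < s /\ GH_admissible G M s1)) as [[s1 [Hs1 Ha]]|Hn].
      * destruct (admissible_corr _ _ _ ((s - s1) / 2) Ha ltac:(lra)) as [C HC].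
        exists C. apply (corr_mono HC). lra.
      * exfalso. enough (s <= r) by lra. apply Hglb. intros s1 Ha.
        destruct (Rle_or_lt s s1); auto. exfalso; eauto.
  - intros [Hlt Hle]. split.
    + intros s Ha. destruct (Rle_or_lt r s) as [h|h]; auto. exfalso.
      destruct (admissible_corr _ _ _ ((r - s) / 2) Ha ltac:(lra)) as [C HC].
      apply Hlt. exists C, (s + (r - s) / 2). split; auto. lra.
    + intros m Hm. destruct (Rle_or_lt m r) as [h|h]; auto. exfalso.
      destruct (Hle ((m + r) / 2) ltac:(lra)) as [C HC].
      pose proof (Hm _ (corr_admissible _ _ _ _ (m - (m - r) / 4) HC ltac:(lra))). lra.
Qed.

Lemma in_sphere_corr0 (G P Q : MetricSpace) (r : R) (C : P -> Q -> Prop) :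
  corr P Q C 0 -> in_sphere G r P -> in_sphere G r Q.
Proof.
  intros HC. rewrite !in_sphere_corr. intros [Hlt Hle]. split.
  - intros [D [s [Hs HD]]]. apply Hlt.
    exists (fun g p => exists q, D g q /\ C p q), (s + 0). split; [lra|].
    exact (corr_comp HD (corr_sym HC)).
  - intros s Hs. destruct (Hle s Hs) as [D HD].
    exists (fun g q => exists p, D g p /\ C p q). rewrite <- (Rplus_0_r s).
    exact (corr_comp HD HC).
Qed.

Lemma GH_continuous_of_corr (a b K : R) (gamma : R -> MetricSpace) : 0 <= K ->
  (forall t t', a <= t <= b -> a <= t' <= b ->
     exists C, corr (gamma t) (gamma t') C (K * Rabs (t - t'))) ->
  GH_continuous_on a b gamma.
Proof.
  intros HK Hcorr t0 Ht0 eps Heps. exists (eps / (K + 1)). split.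
  { apply Rdiv_lt_0_compat; lra. }
  intros t Ht Hdt. destruct (Hcorr t0 t Ht0 Ht) as [C HC].
  assert (Hs : K * Rabs (t0 - t) < eps).
  { rewrite Rabs_minus_sym. pose proof (Rabs_pos (t - t0)).
    assert (eps / (K + 1) * (K + 1) = eps) by (field; lra). nra. }
  exists ((K * Rabs (t0 - t) + eps) / 2). split; [lra|].
  apply (corr_admissible _ _ _ _ _ HC). lra.
Qed.

(* [scale k M] is [M] with its metric multiplied by [k]; the junk value [k <= 0] gives [M]. *)
Definition pos_part_or_one (k : R) : R := if Rlt_dec 0 k then k else 1.

Lemma pos_part_or_one_pos (k : R) : 0 < pos_part_or_one k.
Proof. unfold pos_part_or_one. destruct (Rlt_dec 0 k); lra. Qed.

Lemma pos_part_or_one_eq (k : R) : 0 < k -> pos_part_or_one k = k.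
Proof. unfold pos_part_or_one. destruct (Rlt_dec 0 k); lra. Qed.

Section Scale.
Variables (M : MetricSpace) (k : R).

Let c := pos_part_or_one k.

Lemma scale_dist_refl (x : M) : c * dist x x = 0.
Proof. rewrite dist_refl; ring. Qed.

Lemma scale_dist_sep (x y : M) : c * dist x y = 0 -> x = y.
Proof.
  intros E. apply dist_sep. pose proof (pos_part_or_one_pos k).
  destruct (Rmult_integral _ _ E); auto. unfold c in *. lra.
Qed.

Lemma scale_dist_sym (x y : M) : c * dist x y = c * dist y x.
Proof. now rewrite dist_sym. Qed.

Lemma scale_dist_tri (x y z : M) : c * dist x z <= c * dist x y + c * dist y z.
Proof.
  pose proof (pos_part_or_one_pos k). pose proof (dist_tri M x y z).
  rewrite <- Rmult_plus_distr_l. apply Rmult_le_compat_l; unfold c; lra.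
Qed.

Definition scale : MetricSpace :=
  {| carrier := M; dist := fun x y => c * dist x y; pt := pt M;
     dist_refl := scale_dist_refl; dist_sep := scale_dist_sep;
     dist_sym := scale_dist_sym; dist_tri := scale_dist_tri |}.

End Scale.

Lemma scale_dist (k : R) (M : MetricSpace) (x y : M) : 0 < k ->
  @dist (scale M k) x y = k * dist x y.
Proof. intros Hk. simpl. now rewrite pos_part_or_one_eq. Qed.

Lemma corr_scale (P Q : MetricSpace) (C : P -> Q -> Prop) (s D l m d : R) :
  corr P Q C s -> (forall x y : P, dist x y <= D) -> (forall x y : Q, dist x y <= D) ->
  0 < l -> 0 < m -> Rabs (l - m) * D + 2 * Rmax l m * s <= 2 * d ->
  corr (scale P l) (scale Q m) C d.
Proof.
  intros HC HDP HDQ Hl Hm Hd. pose proof (corr_nonneg HC) as Hs.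
  destruct HC as [Hp [Hq Hdist]]. split; [|split]; auto.
  intros p q p' q' Ha Hb. destruct (Hdist _ _ _ _ Ha Hb) as [E1 E2].
  rewrite !scale_dist by lra.
  pose proof (dist_nonneg P p p'). pose proof (dist_nonneg Q q q').
  pose proof (HDP p p'). pose proof (HDQ q q').
  pose proof (Rmax_l l m). pose proof (Rmax_r l m).
  pose proof (Rle_abs (l - m)). pose proof (Rabs_minus_sym l m). pose proof (Rle_abs (m - l)).
  split.
  - assert (m * @dist Q q q' <= m * (@dist P p p' + 2 * s)) by (apply Rmult_le_compat_l; lra).
    assert ((m - l) * @dist P p p' <= Rabs (l - m) * D) by nra.
    assert (m * s <= Rmax l m * s) by nra. nra.
  - assert (l * @dist P p p' <= l * (@dist Q q q' + 2 * s)) by (apply Rmult_le_compat_l; lra).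
    assert ((l - m) * @dist Q q q' <= Rabs (l - m) * D) by nra.
    assert (l * s <= Rmax l m * s) by nra. nra.
Qed.

Lemma corr_rescale (M : MetricSpace) (D l m : R) :
  (forall x y : M, dist x y <= D) -> 0 < l -> 0 < m ->
  corr (scale M l) (scale M m) eq (Rabs (l - m) * D / 2).
Proof. intros HD Hl Hm. apply (corr_scale M M eq 0 D); auto using corr_eq. lra. Qed.

Lemma corr_same_scale (P Q : MetricSpace) (C : P -> Q -> Prop) (s l : R) :
  corr P Q C s -> 0 < l -> corr (scale P l) (scale Q l) C (l * s).
Proof.
  intros [Hp [Hq Hd]] Hl. split; [|split]; auto.
  intros p q p' q' Ha Hb. destruct (Hd _ _ _ _ Ha Hb) as [E1 E2].
  rewrite !scale_dist by lra. split; nra.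
Qed.

(* Shrinking only helps: the [M]-side distortion shrinks by [m / l], and on the [G]-side a
   distortion [2 s'] is automatic once [2 s'] exceeds the diameter [s0] of [G]. *)
Lemma corr_scale_down (G M : MetricSpace) (C : G -> M -> Prop) (s0 l m s s' : R) :
  (forall g g' : G, dist g g' <= s0) -> 0 < m -> m <= l ->
  corr G (scale M l) C s -> m * s <= l * s' -> s0 <= 2 * s' ->
  corr G (scale M m) C s'.
Proof.
  intros Hs0 Hm Hml HC Hk Hs'. pose proof (corr_nonneg HC).
  destruct HC as [Hp [Hq Hd]]. split; [|split]; auto.
  intros g x g' x' Ha Hb. destruct (Hd _ _ _ _ Ha Hb) as [E1 E2].
  rewrite scale_dist in E1, E2 |- * by lra.
  pose proof (dist_nonneg M x x'). pose proof (dist_nonneg G g g'). pose proof (Hs0 g g').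
  split; [|nra].
  apply (Rmult_le_reg_l l); [lra|].
  assert (m * (l * @dist M x x') <= m * (dist g g' + 2 * s)) by (apply Rmult_le_compat_l; lra).
  assert (m * dist g g' <= l * dist g g') by (apply Rmult_le_compat_r; lra).
  replace (l * (m * @dist M x x')) with (m * (l * @dist M x x')) by ring. lra.
Qed.

Lemma corr_scale_one (M : MetricSpace) : corr M (scale M 1) eq 0.
Proof.
  split; [|split]; eauto. intros p q p' q' <- <-. rewrite scale_dist by lra. split; lra.
Qed.

Lemma isometric_scale_one (M : MetricSpace) : isometric (scale M 1) M.
Proof.
  exists (fun x => x), (fun x => x). split; [|split]; auto.
  intros x x'. rewrite scale_dist by lra. ring.
Qed.

Section LinfProduct.
Variables X Y : MetricSpace.

Definition linf_dist (u v : X * Y) : R := Rmax (dist (fst u) (fst v)) (dist (snd u) (snd v)).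

Lemma linf_dist_refl (u : X * Y) : linf_dist u u = 0.
Proof. unfold linf_dist. rewrite !dist_refl. apply Rmax_left. lra. Qed.

Lemma linf_dist_sep (u v : X * Y) : linf_dist u v = 0 -> u = v.
Proof.
  destruct u as [x y], v as [x' y']. unfold linf_dist. simpl. intros E.
  pose proof (dist_nonneg X x x'). pose proof (dist_nonneg Y y y').
  pose proof (Rmax_l (dist x x') (dist y y')). pose proof (Rmax_r (dist x x') (dist y y')).
  f_equal; apply dist_sep; lra.
Qed.

Lemma linf_dist_sym (u v : X * Y) : linf_dist u v = linf_dist v u.
Proof. unfold linf_dist. now rewrite (dist_sym X (fst u)), (dist_sym Y (snd u)). Qed.

Lemma linf_dist_tri (u v w : X * Y) : linf_dist u w <= linf_dist u v + linf_dist v w.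
Proof.
  unfold linf_dist.
  pose proof (dist_tri X (fst u) (fst v) (fst w)). pose proof (dist_tri Y (snd u) (snd v) (snd w)).
  pose proof (Rmax_l (dist (fst u) (fst v)) (dist (snd u) (snd v))).
  pose proof (Rmax_r (dist (fst u) (fst v)) (dist (snd u) (snd v))).
  pose proof (Rmax_l (dist (fst v) (fst w)) (dist (snd v) (snd w))).
  pose proof (Rmax_r (dist (fst v) (fst w)) (dist (snd v) (snd w))).
  apply Rmax_lub; lra.
Qed.

Definition linf_product : MetricSpace :=
  {| carrier := (X * Y)%type; dist := linf_dist; pt := (pt X, pt Y);
     dist_refl := linf_dist_refl; dist_sep := linf_dist_sep;
     dist_sym := linf_dist_sym; dist_tri := linf_dist_tri |}.

End LinfProduct.

Lemma weighted_product_dist (X Y : MetricSpace) (a b : R)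
  (u v : linf_product (scale X a) (scale Y b)) : 0 < a -> 0 < b ->
  dist u v = Rmax (a * @dist X (fst u) (fst v)) (b * @dist Y (snd u) (snd v)).
Proof. intros Ha Hb. simpl. unfold linf_dist. now rewrite !scale_dist. Qed.

Section WeightedProduct.
Variables (X Y : MetricSpace) (DX DY : R).
Hypotheses (diam_X : forall x x' : X, dist x x' <= DX) (diam_Y : forall y y' : Y, dist y y' <= DY).

Lemma corr_fst_weighted_product (a b s : R) : 0 < a <= 1 -> 0 < b ->
  (1 - a) * DX <= 2 * s -> b * DY <= 2 * s ->
  corr X (linf_product (scale X a) (scale Y b)) (fun x u => fst u = x) s.
Proof.
  intros Ha Hb HsX HsY. split; [|split].
  - intros x. now exists (x, pt Y).
  - intros u. now exists (fst u).
  - intros x u x' u' <- <-. rewrite weighted_product_dist by lra.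
    set (dx := @dist X (fst u) (fst u')). set (dy := @dist Y (snd u) (snd u')).
    assert (0 <= dx) by apply dist_nonneg. assert (0 <= dy) by apply dist_nonneg.
    assert (dx <= DX) by apply diam_X. assert (dy <= DY) by apply diam_Y.
    pose proof (Rmax_l (a * dx) (b * dy)).
    split; [apply Rmax_lub|]; nra.
Qed.

Lemma corr_snd_weighted_product (a b s : R) : 0 < a -> 0 < b <= 1 ->
  a * DX <= 2 * s -> (1 - b) * DY <= 2 * s ->
  corr Y (linf_product (scale X a) (scale Y b)) (fun y u => snd u = y) s.
Proof.
  intros Ha Hb HsX HsY. split; [|split].
  - intros y. now exists (pt X, y).
  - intros u. now exists (snd u).
  - intros y u y' u' <- <-. rewrite weighted_product_dist by lra.
    set (dx := @dist X (fst u) (fst u')). set (dy := @dist Y (snd u) (snd u')).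
    assert (0 <= dx) by apply dist_nonneg. assert (0 <= dy) by apply dist_nonneg.
    assert (dx <= DX) by apply diam_X. assert (dy <= DY) by apply diam_Y.
    pose proof (Rmax_r (a * dx) (b * dy)).
    split; [apply Rmax_lub|]; nra.
Qed.

Lemma corr_weighted_products (a b a' b' s : R) : 0 < a -> 0 < b -> 0 < a' -> 0 < b' ->
  Rabs (a - a') * DX <= 2 * s -> Rabs (b - b') * DY <= 2 * s ->
  corr (linf_product (scale X a) (scale Y b)) (linf_product (scale X a') (scale Y b')) eq s.
Proof.
  intros Ha Hb Ha' Hb' HsX HsY. split; [|split]; eauto.
  intros [x y] v [x' y'] v' <- <-. rewrite !weighted_product_dist by lra. cbn [fst snd].
  pose proof (dist_nonneg X x x'). pose proof (dist_nonneg Y y y').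
  pose proof (diam_X x x'). pose proof (diam_Y y y').
  assert (Rabs (a - a') * @dist X x x' <= 2 * s) by (pose proof (Rabs_pos (a - a')); nra).
  assert (Rabs (b - b') * @dist Y y y' <= 2 * s) by (pose proof (Rabs_pos (b - b')); nra).
  pose proof (Rle_abs (a - a')). pose proof (Rle_abs (a' - a)) as Ha2.
  pose proof (Rle_abs (b - b')). pose proof (Rle_abs (b' - b)) as Hb2.
  rewrite Rabs_minus_sym in Ha2, Hb2.
  pose proof (Rmax_l (a * @dist X x x') (b * @dist Y y y')). pose proof (Rmax_r (a * @dist X x x') (b * @dist Y y y')).
  pose proof (Rmax_l (a' * @dist X x x') (b' * @dist Y y y')). pose proof (Rmax_r (a' * @dist X x x') (b' * @dist Y y y')).
  split; apply Rmax_lub; nra.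
Qed.

End WeightedProduct.

Lemma Rmin_1_lip (u v : R) : Rabs (Rmin 1 u - Rmin 1 v) <= Rabs (u - v).
Proof. unfold Rmin. destruct (Rle_dec 1 u), (Rle_dec 1 v); split_Rabs; lra. Qed.

Lemma Rmin_1_pos (u : R) : 0 < u -> 0 < Rmin 1 u.
Proof. intros. unfold Rmin. destruct (Rle_dec 1 u); lra. Qed.

Definition interpolation (X Y : MetricSpace) (t : R) : MetricSpace :=
  if Rle_dec t 0 then X else if Rle_dec 2 t then Y
  else linf_product (scale X (Rmin 1 (2 - t))) (scale Y (Rmin 1 t)).

Section Interpolation.
Variables (X Y : MetricSpace) (DX DY : R).
Hypotheses (diam_X : forall x x' : X, dist x x' <= DX) (diam_Y : forall y y' : Y, dist y y' <= DY).

Let W := interpolation X Y.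
Let P (t : R) := linf_product (scale X (Rmin 1 (2 - t))) (scale Y (Rmin 1 t)).

Lemma interpolation_0 : W 0 = X.
Proof. unfold W, interpolation. destruct (Rle_dec 0 0); [reflexivity|lra]. Qed.

Lemma interpolation_2 : W 2 = Y.
Proof.
  unfold W, interpolation. destruct (Rle_dec 2 0); [lra|].
  destruct (Rle_dec 2 2); [reflexivity|lra].
Qed.

Lemma interpolation_cases (t : R) : 0 <= t <= 2 ->
  (t = 0 /\ W t = X) \/ (t = 2 /\ W t = Y) \/ (0 < t < 2 /\ W t = P t).
Proof.
  intros Ht. unfold W, P, interpolation. destruct (Rle_dec t 0); [left; split; auto; lra|].
  destruct (Rle_dec 2 t); [right; left; split; auto; lra|]. right; right; split; auto; lra.
Qed.

Lemma interpolation_diam_le (t : R) : 0 <= t <= 2 -> forall u v : W t, dist u v <= DX + DY.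
Proof.
  pose proof (diam_nonneg X DX diam_X). pose proof (diam_nonneg Y DY diam_Y).
  intros Ht. destruct (interpolation_cases t Ht) as [[_ ->]|[[_ ->]|[Hm ->]]]; intros u v.
  - pose proof (diam_X u v). lra.
  - pose proof (diam_Y u v). lra.
  - unfold P. rewrite weighted_product_dist by (apply Rmin_1_pos; lra).
    pose proof (Rmin_l 1 (2 - t)). pose proof (Rmin_l 1 t).
    pose proof (Rmin_1_pos (2 - t) ltac:(lra)). pose proof (Rmin_1_pos t ltac:(lra)).
    pose proof (diam_X (fst u) (fst v)). pose proof (diam_Y (snd u) (snd v)).
    pose proof (dist_nonneg X (fst u) (fst v)). pose proof (dist_nonneg Y (snd u) (snd v)).
    apply Rmax_lub; nra.
Qed.

Lemma interpolation_far (r : R) (t : R) : 0 <= t <= 2 ->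
  (exists x x' : X, r <= dist x x') -> (exists y y' : Y, r <= dist y y') ->
  exists u v : W t, r <= dist u v.
Proof.
  intros Ht [x [x' Hx]] [y [y' Hy]].
  destruct (interpolation_cases t Ht) as [[_ ->]|[[_ ->]|[Hm ->]]]; eauto.
  unfold P. destruct (Rle_or_lt t 1).
  - exists (x, pt Y), (x', pt Y). rewrite weighted_product_dist by (apply Rmin_1_pos; lra).
    rewrite (Rmin_left 1 (2 - t)) by lra. simpl.
    pose proof (Rmax_l (1 * dist x x') (Rmin 1 t * dist (pt Y) (pt Y))). lra.
  - exists (pt X, y), (pt X, y'). rewrite weighted_product_dist by (apply Rmin_1_pos; lra).
    rewrite (Rmin_left 1 t) by lra. simpl.
    pose proof (Rmax_r (Rmin 1 (2 - t) * dist (pt X) (pt X)) (1 * dist y y')). lra.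
Qed.

Lemma corr_interpolation (t t' : R) : 0 <= t <= 2 -> 0 <= t' <= 2 ->
  exists C, corr (W t) (W t') C ((DX + DY) * Rabs (t - t')).
Proof.
  pose proof (diam_nonneg X DX diam_X). pose proof (diam_nonneg Y DY diam_Y).
  intros Ht Ht'.
  assert (Hs : forall u, 0 <= (DX + DY) * Rabs u) by (intros; apply Rmult_le_pos; [lra|apply Rabs_pos]).
  assert (Hmid : forall u, 0 < u < 2 -> 1 - Rmin 1 (2 - u) <= u /\ Rmin 1 u <= u /\
                   1 - Rmin 1 u <= 2 - u /\ Rmin 1 (2 - u) <= 2 - u /\
                   0 < Rmin 1 u <= 1 /\ 0 < Rmin 1 (2 - u) <= 1).
  { intros u Hu. unfold Rmin. destruct (Rle_dec 1 (2 - u)), (Rle_dec 1 u); lra. }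
  destruct (interpolation_cases t Ht) as [[-> ->]|[[-> ->]|[Hm ->]]];
  destruct (interpolation_cases t' Ht') as [[-> ->]|[[-> ->]|[Hm' ->]]].
  - exists eq. exact (corr_mono (corr_eq X) (Hs _)).
  - exists (fun _ _ => True). apply (corr_total X Y DX DY); auto;
      rewrite Rabs_left; lra.
  - exists (fun x u => fst u = x). pose proof (Hmid t' Hm') as (? & ? & ? & ? & ? & ?).
    rewrite Rabs_left by lra. apply (corr_fst_weighted_product X Y DX DY diam_X diam_Y); try lra; nra.
  - exists (fun _ _ => True). apply (corr_total Y X DY DX); auto;
      rewrite Rabs_right; lra.
  - exists eq. exact (corr_mono (corr_eq Y) (Hs _)).
  - exists (fun y u => snd u = y). pose proof (Hmid t' Hm') as (? & ? & ? & ? & ? & ?).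
    rewrite Rabs_right by lra. apply (corr_snd_weighted_product X Y DX DY diam_X diam_Y); try lra; nra.
  - exists (fun u x => fst u = x). apply corr_sym. pose proof (Hmid t Hm) as (? & ? & ? & ? & ? & ?).
    rewrite Rabs_right by lra. apply (corr_fst_weighted_product X Y DX DY diam_X diam_Y); try lra; nra.
  - exists (fun u y => snd u = y). apply corr_sym. pose proof (Hmid t Hm) as (? & ? & ? & ? & ? & ?).
    rewrite Rabs_left by lra. apply (corr_snd_weighted_product X Y DX DY diam_X diam_Y); try lra; nra.
  - exists eq. pose proof (Rmin_1_lip (2 - t) (2 - t')). pose proof (Rmin_1_lip t t').
    replace (2 - t - (2 - t')) with (- (t - t')) in * by ring. rewrite Rabs_Ropp in *.
    pose proof (Rabs_pos (t - t')).
    apply (corr_weighted_products X Y DX DY diam_X diam_Y); try (apply Rmin_1_pos; lra); nra.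
Qed.

End Interpolation.

Section Sphere.
Variables (G : MetricSpace) (r s0 : R).
Hypotheses (diam_G : forall g g' : G, dist g g' <= s0) (diam_lt_r : s0 < r).

Let s0_nonneg : 0 <= s0 := diam_nonneg G s0 diam_G.

Lemma in_sphere_diam_le (M : MetricSpace) :
  in_sphere G r M -> forall x y : M, dist x y <= s0 + 2 * (r + 1).
Proof.
  rewrite in_sphere_corr. intros [_ Hle].
  destruct (Hle (r + 1) ltac:(lra)) as [C [_ [Hq Hd]]]. intros x y.
  destruct (Hq x) as [g Hg]. destruct (Hq y) as [g' Hg'].
  destruct (Hd _ _ _ _ Hg Hg') as [E _]. pose proof (diam_G g g'). lra.
Qed.

Lemma in_sphere_far (M : MetricSpace) : in_sphere G r M -> exists x y : M, r <= dist x y.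
Proof.
  rewrite in_sphere_corr. intros [Hlt _]. apply NNPP. intros Hn. apply Hlt.
  assert (Hnear : forall x y : M, dist x y <= r).
  { intros x y. apply Rnot_lt_le. intros h. apply Hn. exists x, y. lra. }
  exists (fun _ _ => True), (Rmax s0 r / 2). split.
  - assert (Rmax s0 r < 2 * r) by (apply Rmax_lub_lt; lra). lra.
  - apply (corr_total G M s0 r); auto; [pose proof (Rmax_l s0 r)|pose proof (Rmax_r s0 r)]; lra.
Qed.

Lemma corr_lt_scale_small (M : MetricSpace) (D : R) :
  (forall x y : M, dist x y <= D) -> corr_lt G (scale M (r / (D + 1))) r.
Proof.
  intros HD. pose proof (diam_nonneg M D HD).
  set (l := r / (D + 1)).
  assert (Hl : 0 < l) by (apply Rdiv_lt_0_compat; lra).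
  assert (HlD : l * D < r) by (assert (l * (D + 1) = r) by (unfold l; field; lra); nra).
  exists (fun _ _ => True), (Rmax s0 (l * D) / 2). split.
  - assert (Rmax s0 (l * D) < r) by (apply Rmax_lub_lt; lra). lra.
  - apply (corr_total G _ s0 (l * D)); auto.
    + intros x y. rewrite scale_dist by lra. apply Rmult_le_compat_l; [lra|apply HD].
    + pose proof (Rmax_l s0 (l * D)). lra.
    + pose proof (Rmax_r s0 (l * D)). lra.
Qed.

Lemma not_corr_lt_scale_large (M : MetricSpace) (l : R) :
  0 < l -> s0 + 2 * r <= l * r -> (exists x y : M, r <= dist x y) -> ~ corr_lt G (scale M l) r.
Proof.
  intros Hl Hlr [x [y Hxy]] [C [s [Hs [_ [Hq Hd]]]]].
  destruct (Hq x) as [g Hg]. destruct (Hq y) as [g' Hg'].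
  destruct (Hd _ _ _ _ Hg Hg') as [E _]. rewrite scale_dist in E by lra.
  pose proof (diam_G g g'). assert (l * r <= l * dist x y) by (apply Rmult_le_compat_l; lra).
  lra.
Qed.

(* Strict shrinking moves [d_GH(G, .) <= r] strictly below [r]: here [r > diam G] is used. *)
Lemma corr_lt_scale_down (M : MetricSpace) (a b : R) :
  0 < a < b -> corr_le G (scale M b) r -> corr_lt G (scale M a) r.
Proof.
  intros Hab Hle.
  set (s := r * (a + b) / (2 * a)).
  assert (Hs : r < s) by (unfold s; apply (Rmult_lt_reg_l (2 * a)); [lra|]; field_simplify; nra).
  destruct (Hle s Hs) as [C HC].
  set (s' := Rmax (r * (a + b) / (2 * b)) (s0 / 2)).
  assert (Hs'1 : r * (a + b) / (2 * b) <= s') by apply Rmax_l.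
  assert (Hs'2 : s0 / 2 <= s') by apply Rmax_r.
  exists C, s'. split.
  - apply Rmax_lub_lt; [|lra].
    apply (Rmult_lt_reg_l (2 * b)); [lra|]. field_simplify; nra.
  - apply (corr_scale_down G M C s0 b a s s'); auto; try lra.
    assert (a * s = b * (r * (a + b) / (2 * b))) by (unfold s; field; lra).
    apply Rmult_le_compat_l with (r := b) in Hs'1; lra.
Qed.

Lemma in_sphere_scale_unique (M : MetricSpace) (l m : R) : 0 < l -> 0 < m ->
  in_sphere G r (scale M l) -> in_sphere G r (scale M m) -> l = m.
Proof.
  intros Hl Hm.
  assert (Hlt : forall a b, 0 < a < b ->
    in_sphere G r (scale M a) -> in_sphere G r (scale M b) -> False).
  { intros a b Hab. rewrite !in_sphere_corr. intros [Hnot _] [_ Hle].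
    exact (Hnot (corr_lt_scale_down M a b Hab Hle)). }
  intros HSl HSm. destruct (Rtotal_order l m) as [h|[h|h]]; auto; exfalso; eauto.
Qed.

(* Rescaling by [r / (r + x delta)] absorbs the extra distortion [x delta] of passing
   from [x N] to [x M]. *)
Lemma corr_lt_transfer (M N : MetricSpace) (C : M -> N -> Prop) (delta x : R) :
  corr M N C delta -> 0 < x -> corr_lt G (scale N x) r ->
  corr_lt G (scale M (x * (r / (r + x * delta)))) r.
Proof.
  intros HC Hx [C1 [s [Hs HC1]]].
  pose proof (corr_nonneg HC) as Hdelta.
  assert (Hr : 0 < r) by (pose proof s0_nonneg; lra).
  set (c := r / (r + x * delta)).
  assert (Hc : c * (r + x * delta) = r) by (unfold c; field; nra).
  assert (Hc0 : 0 < c) by (unfold c; apply Rdiv_lt_0_compat; nra).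
  assert (Hc1 : c <= 1).
  { assert (0 <= c * (x * delta)) by (apply Rmult_le_pos; [lra|apply Rmult_le_pos; lra]). nra. }
  pose proof (corr_comp HC1 (corr_same_scale _ _ _ _ x (corr_sym HC) Hx)) as HC2.
  exists (fun g m => exists n, C1 g n /\ C m n), (Rmax (c * (s + x * delta)) (s0 / 2)).
  split.
  - apply Rmax_lub_lt; nra.
  - apply (corr_scale_down G M _ s0 x (x * c) (s + x * delta)); auto; try nra.
    + pose proof (Rmax_l (c * (s + x * delta)) (s0 / 2)). nra.
    + pose proof (Rmax_r (c * (s + x * delta)) (s0 / 2)). lra.
Qed.

Definition sphere_scale (M : MetricSpace) (lmin lmax : R) : R :=
  Rsup (fun l => lmin <= l <= lmax /\ corr_lt G (scale M l) r).

Section SphereScale.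
Variables (M : MetricSpace) (D lmin lmax : R).
Hypotheses (diam_M : forall x y : M, dist x y <= D) (lmin_pos : 0 < lmin)
  (lmin_le_lmax : lmin <= lmax) (lt_lmin : corr_lt G (scale M lmin) r)
  (not_lt_lmax : ~ corr_lt G (scale M lmax) r).

Let lam := sphere_scale M lmin lmax.

Lemma sphere_scale_lub : is_lub (fun l => lmin <= l <= lmax /\ corr_lt G (scale M l) r) lam.
Proof.
  apply Rsup_lub.
  - exists lmax. intros x [Hx _]. lra.
  - exists lmin. split; auto. lra.
Qed.

Lemma sphere_scale_bounds : lmin <= lam <= lmax.
Proof.
  destruct sphere_scale_lub as [Hub Hleast]. split.
  - apply Hub. split; auto. lra.
  - apply Hleast. intros x [Hx _]. lra.
Qed.

Lemma le_sphere_scale (y : R) : y <= lmax -> corr_lt G (scale M y) r -> y <= lam.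
Proof.
  intros Hyl Hlt. pose proof sphere_scale_bounds.
  destruct (Rlt_or_le y lmin); [lra|]. apply sphere_scale_lub. split; [lra|exact Hlt].
Qed.

Lemma sphere_scale_not_lt : ~ corr_lt G (scale M lam) r.
Proof.
  intros [C [s [Hs HC]]]. pose proof sphere_scale_bounds. pose proof (diam_nonneg M D diam_M).
  destruct (Req_dec lam lmax) as [Heq|Hne].
  { apply not_lt_lmax. rewrite <- Heq. now exists C, s. }
  set (eta := Rmin (lmax - lam) ((r - s) / (D + 1))).
  assert (Heta : 0 < eta) by (apply Rmin_pos; [lra|apply Rdiv_lt_0_compat; lra]).
  assert (Heta1 : eta <= lmax - lam) by apply Rmin_l.
  assert (Heta2 : eta * D < r - s).
  { assert (eta * (D + 1) <= r - s); [|nra].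
    assert (eta <= (r - s) / (D + 1)) by apply Rmin_r.
    assert ((r - s) / (D + 1) * (D + 1) = r - s) by (field; lra).
    assert (eta * (D + 1) <= (r - s) / (D + 1) * (D + 1)) by (apply Rmult_le_compat_r; lra).
    lra. }
  pose proof (corr_rescale M D lam (lam + eta) diam_M ltac:(lra) ltac:(lra)) as HR.
  replace (Rabs (lam - (lam + eta))) with eta in HR
    by (rewrite <- Rabs_Ropp, Rabs_pos_eq; lra).
  enough (lam + eta <= lam) by lra.
  apply le_sphere_scale; try lra.
  exists (fun g y => exists x, C g x /\ x = y), (s + eta * D / 2). split; [lra|].
  exact (corr_comp HC HR).
Qed.

Lemma sphere_scale_le : corr_le G (scale M lam) r.
Proof.
  intros s Hs. destruct sphere_scale_lub as [Hub Hleast].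
  pose proof (diam_nonneg M D diam_M).
  set (eps := (s - r) / (D + 1)).
  assert (Heps : 0 < eps) by (apply Rdiv_lt_0_compat; lra).
  assert (HepsD : eps * D < s - r)
    by (assert (eps * (D + 1) = s - r) by (unfold eps; field; lra); nra).
  destruct (classic (exists x, (lmin <= x <= lmax /\ corr_lt G (scale M x) r) /\ lam - eps < x))
    as [[x [[Hx [C [s1 [Hs1 HC]]]] Hxl]]|Hn].
  - assert (x <= lam) by (apply Hub; split; auto; now exists C, s1).
    pose proof (corr_rescale M D x lam diam_M ltac:(lra) ltac:(lra)) as HR.
    rewrite Rabs_minus_sym, Rabs_pos_eq in HR by lra.
    eexists. apply (corr_mono (corr_comp HC HR)).
    assert ((lam - x) * D <= eps * D) by (apply Rmult_le_compat_r; lra). lra.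
  - exfalso. enough (lam <= lam - eps) by lra. apply Hleast. intros x Hx.
    apply Rnot_lt_le. intros h. eauto.
Qed.

Lemma in_sphere_sphere_scale : in_sphere G r (scale M lam).
Proof. apply in_sphere_corr. split; [exact sphere_scale_not_lt|exact sphere_scale_le]. Qed.

End SphereScale.

Lemma in_sphere_scale_isometric (M : MetricSpace) (l : R) : 0 < l ->
  in_sphere G r M -> in_sphere G r (scale M l) -> isometric (scale M l) M.
Proof.
  intros Hl HM HlM.
  pose proof (in_sphere_corr0 G M (scale M 1) r eq (corr_scale_one M) HM) as H1M.
  rewrite (in_sphere_scale_unique M l 1 Hl ltac:(lra) HlM H1M).
  apply isometric_scale_one.
Qed.

Section RescaledFamily.
Variables (W : R -> MetricSpace) (D K lmin lmax : R).
Hypotheses (K_nonneg : 0 <= K)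
  (diam_W : forall t, 0 <= t <= 2 -> forall x y : W t, dist x y <= D)
  (corr_W : forall t t', 0 <= t <= 2 -> 0 <= t' <= 2 ->
     exists C, corr (W t) (W t') C (K * Rabs (t - t')))
  (lmin_pos : 0 < lmin) (lmin_le_lmax : lmin <= lmax)
  (lt_lmin : forall t, 0 <= t <= 2 -> corr_lt G (scale (W t) lmin) r).

Let lam (t : R) : R := sphere_scale (W t) lmin lmax.

Lemma sphere_scale_family_bounds (t : R) : 0 <= t <= 2 -> lmin <= lam t <= lmax.
Proof. intros Ht. exact (sphere_scale_bounds (W t) lmin lmax lmin_le_lmax (lt_lmin t Ht)). Qed.

Lemma sphere_scale_family_lipschitz (t t' : R) : 0 <= t <= 2 -> 0 <= t' <= 2 ->
  lam t <= lam t' + lmax * lmax * K / r * Rabs (t - t').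
Proof.
  intros Ht Ht'. pose proof (sphere_scale_family_bounds t' Ht') as Hb'.
  assert (Hr : 0 < r) by (pose proof s0_nonneg; lra).
  apply (sphere_scale_lub (W t) lmin lmax lmin_le_lmax (lt_lmin t Ht)).
  intros x [Hx Hlt]. destruct (corr_W t' t Ht' Ht) as [C HC].
  set (delta := K * Rabs (t' - t)) in HC.
  assert (Hdelta : 0 <= delta) by exact (corr_nonneg HC).
  pose proof (corr_lt_transfer (W t') (W t) C delta x HC ltac:(lra) Hlt) as Hlt'.
  set (c := r / (r + x * delta)) in Hlt'.
  assert (Hc : c * (r + x * delta) = r) by (unfold c; field; nra).
  assert (Hc0 : 0 < c) by (unfold c; apply Rdiv_lt_0_compat; nra).
  assert (Hxc : x * c <= lam t').
  { apply (le_sphere_scale (W t') lmin lmax lmin_le_lmax (lt_lmin t' Ht')); [|exact Hlt'].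
    assert (0 <= c * (x * delta)) by (apply Rmult_le_pos; [lra|apply Rmult_le_pos; lra]). nra. }
  assert (Hxr : x * r <= lam t' * r + lmax * lmax * delta).
  { assert (x * r = x * c * (r + x * delta)) by (rewrite Rmult_assoc, Hc; ring).
    assert (lam t' * (x * delta) <= lmax * (lmax * delta)) by (apply Rmult_le_compat; nra).
    nra. }
  unfold delta in Hxr. rewrite Rabs_minus_sym in Hxr.
  apply (Rmult_le_reg_r r); [lra|]. field_simplify; [nra|lra].
Qed.

Lemma corr_rescaled_family (t t' : R) : 0 <= t <= 2 -> 0 <= t' <= 2 ->
  exists C, corr (scale (W t) (lam t)) (scale (W t') (lam t'))
              C ((lmax * lmax * K / r * D + 2 * lmax * K) / 2 * Rabs (t - t')).
Proof.
  intros Ht Ht'. pose proof (diam_nonneg _ D (diam_W t Ht)) as HD.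
  pose proof (sphere_scale_family_bounds t Ht). pose proof (sphere_scale_family_bounds t' Ht').
  pose proof (sphere_scale_family_lipschitz t t' Ht Ht').
  pose proof (sphere_scale_family_lipschitz t' t Ht' Ht) as Hlip. rewrite Rabs_minus_sym in Hlip.
  destruct (corr_W t t' Ht Ht') as [C HC]. exists C.
  apply (corr_scale _ _ _ (K * Rabs (t - t')) D); auto; try lra.
  set (L := lmax * lmax * K / r) in *. set (h := Rabs (t - t')) in *.
  assert (Hh : 0 <= h) by apply Rabs_pos.
  assert (Rabs (lam t - lam t') <= L * h) by (apply Rabs_le; lra).
  assert (Rmax (lam t) (lam t') <= lmax) by (apply Rmax_lub; lra).
  assert (Rabs (lam t - lam t') * D <= L * h * D) by (apply Rmult_le_compat_r; lra).
  assert (Rmax (lam t) (lam t') * (K * h) <= lmax * (K * h))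
    by (apply Rmult_le_compat_r; [apply Rmult_le_pos|]; lra).
  nra.
Qed.

Lemma rescaled_family_GH_continuous : GH_continuous_on 0 2 (fun t => scale (W t) (lam t)).
Proof.
  apply (GH_continuous_of_corr _ _ ((lmax * lmax * K / r * D + 2 * lmax * K) / 2)).
  - pose proof (diam_nonneg _ D (diam_W 0 ltac:(lra))).
    assert (0 < r) by (pose proof s0_nonneg; lra).
    assert (0 <= lmax * lmax * K / r) by (apply Rmult_le_pos; [nra|apply Rlt_le, Rinv_0_lt_compat; lra]).
    nra.
  - exact corr_rescaled_family.
Qed.

End RescaledFamily.

Lemma in_sphere_path (W : R -> MetricSpace) (D K : R) : 0 <= D -> 0 <= K ->
  (forall t, 0 <= t <= 2 -> forall x y : W t, dist x y <= D) ->
  (forall t t', 0 <= t <= 2 -> 0 <= t' <= 2 -> exists C, corr (W t) (W t') C (K * Rabs (t - t'))) ->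
  (forall t, 0 <= t <= 2 -> exists x y : W t, r <= dist x y) ->
  exists lam : R -> R,
    (forall t, 0 <= t <= 2 -> 0 < lam t /\ in_sphere G r (scale (W t) (lam t))) /\
    GH_continuous_on 0 2 (fun t => scale (W t) (lam t)).
Proof.
  intros HD HK diam_W corr_W far_W. pose proof s0_nonneg.
  set (lmin := r / (D + 1)). set (lmax := (s0 + 2 * r) / r + lmin).
  assert (Hmin : 0 < lmin) by (apply Rdiv_lt_0_compat; lra).
  assert (Hmax : s0 + 2 * r <= lmax * r)
    by (unfold lmax; assert ((s0 + 2 * r) / r * r = s0 + 2 * r) by (field; lra); nra).
  assert (Hle : lmin <= lmax)
    by (unfold lmax; assert (0 <= (s0 + 2 * r) / r) by (apply Rlt_le, Rdiv_lt_0_compat; lra); lra).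
  assert (lt_lmin : forall t, 0 <= t <= 2 -> corr_lt G (scale (W t) lmin) r)
    by (intros t Ht; exact (corr_lt_scale_small (W t) D (diam_W t Ht))).
  assert (not_lt_lmax : forall t, 0 <= t <= 2 -> ~ corr_lt G (scale (W t) lmax) r)
    by (intros t Ht; apply not_corr_lt_scale_large; auto; lra).
  exists (fun t => sphere_scale (W t) lmin lmax). split.
  - intros t Ht. pose proof (sphere_scale_bounds (W t) lmin lmax Hle (lt_lmin t Ht)).
    split; [lra|].
    exact (in_sphere_sphere_scale (W t) D lmin lmax (diam_W t Ht) Hmin Hle (lt_lmin t Ht)
             (not_lt_lmax t Ht)).
  - exact (rescaled_family_GH_continuous W D K lmin lmax HK diam_W corr_W Hmin Hle lt_lmin).
Qed.

End Sphere.

Theorem theorem2 (G : MetricSpace) (r : R) :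
  ms_bounded G -> diam_lt G r ->
  (forall Y : MetricSpace, in_sphere G r Y -> ms_bounded Y) /\
  (forall X Y : MetricSpace, in_sphere G r X -> in_sphere G r Y ->
     exists (a b : R) (gamma : R -> MetricSpace),
       a <= b /\
       GH_continuous_on a b gamma /\
       isometric (gamma a) X /\ isometric (gamma b) Y /\
       (forall t, a <= t <= b -> in_sphere G r (gamma t))).
Proof.
  intros _ [s0 [Hs0r HG]]. pose proof (diam_nonneg G s0 HG).
  set (D := s0 + 2 * (r + 1)).
  split; [intros M HM; exists D; exact (in_sphere_diam_le G r s0 HG M HM)|].
  intros X Y HX HY.
  pose proof (in_sphere_diam_le G r s0 HG X HX) as HdX.
  pose proof (in_sphere_diam_le G r s0 HG Y HY) as HdY.
  destruct (in_sphere_path G r s0 HG Hs0r (interpolation X Y) (D + D) (D + D))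
    as [lam [Hlam Hcont]]; try (unfold D; lra).
  - exact (interpolation_diam_le X Y D D HdX HdY).
  - exact (corr_interpolation X Y D D HdX HdY).
  - intros t Ht. apply interpolation_far; [exact Ht| |];
      [exact (in_sphere_far G r s0 HG Hs0r X HX)|exact (in_sphere_far G r s0 HG Hs0r Y HY)].
  - exists 0, 2, (fun t => scale (interpolation X Y t) (lam t)).
    split; [lra|split; [exact Hcont|]].
    destruct (Hlam 0 ltac:(lra)) as [Hpos0 HS0]. destruct (Hlam 2 ltac:(lra)) as [Hpos2 HS2].
    rewrite interpolation_0 in HS0 |- *. rewrite interpolation_2 in HS2 |- *.
    split; [|split; [|intros t Ht; apply Hlam, Ht]].
    + exact (in_sphere_scale_isometric G r s0 HG Hs0r X (lam 0) Hpos0 HX HS0).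
    + exact (in_sphere_scale_isometric G r s0 HG Hs0r Y (lam 2) Hpos2 HY HS2).
Qed.
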